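(* For $\lambda>0$ let $\eta = \eta(\lambda) = (\lambda-1)\sqrt{\frac{2 (\lambda-1-\ln \lambda)}{(\lambda-1)^{2}}}$ (principal branch of the root). Let $\gamma_j$ be the Stirling coefficients $\gamma_{j} = \frac{(-1)^{j}}{2^{j} \, j!} \Big[ \frac{d^{2j}}{dx^{2j}} \Big( \frac{1}{2}\frac{x^{2}}{x-\ln(1+x)} \Big)^{j+\frac{1}{2}} \Big]_{x=0}$, and define functions $c_j(\eta)$ by $c_{0}(\eta) = \frac{1}{\lambda-1}-\frac{1}{\eta}$ and $c_{j}(\eta) = \frac{1}{\eta} \frac{d}{d\eta}c_{j-1}(\eta) + \frac{\gamma_{j}}{\lambda-1}$ for $j \geq 1$ (with $\lambda$ regarded as a function of $\eta$). Then for every $j \geq 0$, $$c_j(\eta) = \varphi_j(\lambda) - S(\varphi_j(\lambda)), \qquad \varphi_j(\lambda) := \frac{(-1)^{j+1} (2j-1)!!}{\eta^{2j+1}},$$ where $S(\varphi_j(\lambda))$ denotes the singular part of $\varphi_j$ at $\lambda = 1$, i.e. the sum of the terms with negative powers of $\lambda-1$ in the Laurent expansion of $\varphi_j(\lambda)$ at $\lambda=1$.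
   Context: $(2j-1)!!=1\cdot3\cdots(2j-1)$, with $(-1)!!=1$. The map $\lambda\mapsto\eta$ is real-analytic and increasing with $\eta(1)=0$, $\eta'(1)=1$, so $\eta^{-(2j+1)}$ has a pole of order $2j+1$ at $\lambda=1$. (These $c_j$ are the coefficients in Temme's uniform asymptotic expansion $R_a(\eta)\sim \frac{e^{-a\eta^2/2}}{\sqrt{2\pi a}}\sum_j c_j(\eta)a^{-j}$ of the remainder in $\gamma(a,z)/\Gamma(a)=\frac12\mathrm{erfc}(-\eta\sqrt{a/2})-R_a(\eta)$, $\lambda=z/a$.) *)

From Stdlib Require Import Reals ClassicalEpsilon.
From Coquelicot Require Import Coquelicot.
Open Scope R_scope.

Definition eta (l : R) : R :=
  (l - 1) * sqrt (2 * (l - 1 - ln l) / (l - 1) ^ 2).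

(* lambda as a function of eta: the inverse of eta : (0,+oo) -> R
   (eta is an increasing bijection from (0,+oo) onto R). *)
Definition lam_of (e : R) : R :=
  epsilon (inhabits 1) (fun l => 0 < l /\ eta l = e).

(* g(x) = (1/2) x^2 / (x - ln(1+x)), extended by continuity (g(0) = 1). *)
Definition stir_g (x : R) : R :=
  if Req_EM_T x 0 then 1 else / 2 * x ^ 2 / (x - ln (1 + x)).

Definition gamma_st (j : nat) : R :=
  (-1) ^ j / (2 ^ j * INR (Factorial.fact j)) *
  Derive_n (fun x => Rpower (stir_g x) (INR j + / 2)) (2 * j) 0.

Fixpoint c_fun (j : nat) : R -> R :=
  match j with
  | O => fun e => 1 / (lam_of e - 1) - 1 / e
  | S j' => fun e => 1 / e * Derive (c_fun j') e + gamma_st j / (lam_of e - 1)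
  end.

(* (2j-1)!! = 1 * 3 * ... * (2j-1), with (-1)!! = 1. *)
Fixpoint odd_dfact (j : nat) : nat :=
  match j with
  | O => 1%nat
  | S j' => ((2 * j' + 1) * odd_dfact j')%nat
  end.

Definition phi (j : nat) (l : R) : R :=
  (-1) ^ (S j) * INR (odd_dfact j) / eta l ^ (2 * j + 1).

(* S is the singular (principal) part of f at a: f has a Laurent expansion
   f(x) = sum_{k=1}^{N+1} b_k (x-a)^{-k} + sum_{n>=0} c_n (x-a)^n  on a punctured
   neighbourhood 0 < |x-a| < r, and S(x) is the sum of the negative-power terms. *)
Definition is_singular_part (f : R -> R) (a : R) (Sp : R -> R) : Prop :=
  exists (N : nat) (b c : nat -> R) (r : R),
    0 < r /\
    (forall x, Sp x = sum_f_R0 (fun k => b k / (x - a) ^ (S k)) N) /\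
    (forall x, 0 < Rabs (x - a) < r -> is_pseries c (x - a) (f x - Sp x)).

(* With x = lambda - 1 one has x - ln(1 + x) = x^2 Q(x) / 2 for an explicit power series Q
   with Q(0) = 1, so K = Q^(-1/2) is a power series (built from the ODE 2 Q K' + Q' K = 0)
   with eta(1 + x) = x / K(x) and g = K^2.  Hence phi_j(1 + x) is a constant times
   K(x)^(2j+1) / x^(2j+1): a Laurent series whose principal part comes from the coefficients
   of x^0, ..., x^(2j) in K^(2j+1), and gamma_j is exactly minus its 1/x coefficient.
   Since d eta / d lambda = (lambda - 1) / (lambda eta), the recursion for c_j reads
   c_(j+1) = lambda / (lambda - 1) d/dlambda c_j + gamma_(j+1) / (lambda - 1), and
   lambda / (lambda - 1) phi_j' = phi_(j+1).  Writing phi_j = S_j + R_j (principal and regular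
   parts), (1 + 1/x) R_j' = R_j'(0) / x + regular, so uniqueness of principal parts gives
   S_(j+1) = (1 + 1/x) S_j' - gamma_(j+1) / x, and the claim follows by induction on j. *)

From Stdlib Require Import Reals ClassicalEpsilon Lra Lia.
From Coquelicot Require Import Coquelicot.
Open Scope R_scope.

Lemma CV_radius_ge_of_ex_pseries (a : nat -> R) (r : R) :
  0 < r -> (forall x, 0 < Rabs x < r -> ex_pseries a x) -> Rbar_le r (CV_radius a).
Proof.
  intros Hr Hex.
  destruct (CV_radius a) as [l| |] eqn:E; simpl; try easy.
  - apply Rnot_lt_le; intro Hl.
    assert (Hl0 : 0 <= l) by (generalize (CV_radius_ge_0 a); rewrite E; easy).
    set (t := (l + r) / 2).
    assert (Ht : 0 < Rabs t < r) by (unfold t; rewrite Rabs_pos_eq; lra).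
    destruct (Hex t Ht) as [s Hs].
    apply (CV_disk_outside a t); [rewrite E; simpl; unfold t; rewrite Rabs_pos_eq; lra|].
    apply is_lim_seq_ext with (fun n => scal (pow_n t n) (a n)).
    + intro n. rewrite pow_n_pow. unfold scal; simpl. unfold mult; simpl. ring.
    + apply ex_series_lim_0. exists s. exact Hs.
  - generalize (CV_radius_ge_0 a); rewrite E; easy.
Qed.

Lemma CV_radius_ge_of_bounded (a : nat -> R) (r M : R) :
  (forall n, Rabs (a n * r ^ n) <= M) -> Rbar_le r (CV_radius a).
Proof.
  intro H. destruct (CV_radius_bounded a) as [Hub _]. apply Hub. exists M. exact H.
Qed.

Lemma Rabs_lt_CV_radius (a : nat -> R) (r x : R) :
  Rbar_le r (CV_radius a) -> Rabs x < r -> Rbar_lt (Rabs x) (CV_radius a).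
Proof. intros H1 H2. destruct (CV_radius a); simpl in *; try easy; lra. Qed.

Lemma locally_of_Rabs_lt (x e : R) (P : R -> Prop) :
  0 < e -> (forall y, Rabs (y - x) < e -> P y) -> locally x P.
Proof. intros He H. exists (mkposreal e He). exact H. Qed.

Lemma is_derive_continuity_pt (f : R -> R) (x l : R) :
  is_derive f x l -> continuity_pt f x.
Proof. intro H. apply derivable_continuous_pt. exists l. apply is_derive_Reals, H. Qed.

Lemma is_derive_0_eq (f : R -> R) (a b : R) :
  (forall t, Rabs (t - a) <= Rabs (b - a) -> is_derive f t 0) -> f b = f a.
Proof.
  intro H. destruct (MVT_cor4 f (fun _ => 0) a (Rabs (b - a)) H b (Rle_refl _))
    as [c [Hc _]].
  lra.
Qed.

Lemma continuity_pt_punctured_eq (f g : R -> R) (a r : R) :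
  0 < r -> continuity_pt f a -> continuity_pt g a ->
  (forall x, 0 < Rabs (x - a) < r -> f x = g x) -> f a = g a.
Proof.
  intros Hr Hf Hg H.
  assert (Hfg : is_lim g a (f a)).
  { apply (is_lim_ext_loc f); [|apply is_lim_continuity, Hf].
    exists (mkposreal r Hr). intros y Hy Hya. apply H. split; [|exact Hy].
    apply Rabs_pos_lt. lra. }
  apply is_lim_unique in Hfg. rewrite (is_lim_unique _ _ _ (is_lim_continuity _ _ Hg)) in Hfg.
  now injection Hfg.
Qed.

Lemma pos_of_nonvanishing (f : R -> R) (a b : R) :
  (forall t, Rmin a b <= t <= Rmax a b -> continuity_pt f t /\ f t <> 0) ->
  0 < f a -> 0 < f b.
Proof.
  intros H Ha. destruct (Rlt_or_le 0 (f b)) as [Hb|Hb]; [exact Hb|exfalso].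
  assert (Hb' : f b < 0) by (destruct (H b); [apply Rmin_Rmax_r|lra]).
  destruct (Rlt_or_le a b) as [Hab|Hab].
  - destruct (Ranalysis5.IVT_interv (fun t => - f t) a b) as [z [Hz Hfz]]; try lra.
    + intros t Ht. apply continuity_pt_opp, H.
      rewrite Rmin_left, Rmax_right; lra.
    + apply (H z); [rewrite Rmin_left, Rmax_right; lra | lra].
  - assert (Hba : b < a) by (destruct (Req_dec a b) as [->|]; lra).
    destruct (Ranalysis5.IVT_interv f b a) as [z [Hz Hfz]]; try lra.
    + intros t Ht. apply H. rewrite Rmin_right, Rmax_left; lra.
    + apply (H z); [rewrite Rmin_right, Rmax_left; lra | exact Hfz].
Qed.

(** * Principal parts of Laurent series *)

Definition principal_part (b : nat -> R) (N : nat) (x : R) : R :=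
  sum_f_R0 (fun k => b k / x ^ S k) N.

Definition coef_trunc (b : nat -> R) (N k : nat) : R :=
  if (k <=? N)%nat then b k else 0.

Definition coef_shift (b : nat -> R) (k : nat) : R :=
  match k with O => 0 | S k' => b k' end.

Lemma principal_part_plus (b b' : nat -> R) N x :
  principal_part (fun k => b k + b' k) N x = principal_part b N x + principal_part b' N x.
Proof.
  unfold principal_part. induction N as [|N IH].
  - simpl. unfold Rdiv. ring.
  - rewrite !tech5, IH. unfold Rdiv. ring.
Qed.

Lemma principal_part_minus (b b' : nat -> R) N x :
  principal_part (fun k => b k - b' k) N x = principal_part b N x - principal_part b' N x.
Proof.
  unfold principal_part. induction N as [|N IH].
  - simpl. unfold Rdiv. ring.
  - rewrite !tech5, IH. unfold Rdiv. ring.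
Qed.

Lemma principal_part_trunc (b : nat -> R) N M x :
  (N <= M)%nat -> principal_part (coef_trunc b N) M x = principal_part b N x.
Proof.
  intro H. induction M as [|M IH].
  - replace N with O by lia. reflexivity.
  - destruct (Nat.eq_dec N (S M)) as [->|Hne].
    + apply sum_eq. intros i Hi. unfold coef_trunc.
      now replace (i <=? S M)%nat with true by (symmetry; apply Nat.leb_le; lia).
    + unfold principal_part in *. rewrite tech5, IH by lia. unfold coef_trunc.
      replace (S M <=? N)%nat with false by (symmetry; apply Nat.leb_gt; lia).
      unfold Rdiv. ring.
Qed.

Lemma principal_part_shift (b : nat -> R) N x :
  x <> 0 -> principal_part (coef_shift b) (S N) x = principal_part b N x / x.
Proof.
  intro Hx. unfold principal_part. induction N as [|N IH].
  - simpl. field. exact Hx.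
  - rewrite tech5, IH, tech5. simpl. field.
    repeat split; try apply pow_nonzero; exact Hx.
Qed.

Definition coef_derive (b : nat -> R) : nat -> R :=
  coef_shift (fun k => - INR (S k) * b k).

Lemma is_derive_principal_part (b : nat -> R) N x :
  x <> 0 -> is_derive (principal_part b N) x (principal_part (coef_derive b) (S N) x).
Proof.
  intro Hx. induction N as [|N IH].
  - apply (is_derive_ext (fun y => b 0%nat / y ^ 1)); [reflexivity|].
    auto_derive; [rewrite Rmult_1_r; exact Hx|].
    unfold principal_part, coef_derive, coef_shift. simpl. field. exact Hx.
  - apply (is_derive_ext (fun y => principal_part b N y + b (S N) / y ^ S (S N)));
      [intro t; unfold principal_part; now rewrite tech5|].
    unfold principal_part at 2. rewrite tech5.
    apply (is_derive_plus (principal_part b N)); [exact IH|].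
    auto_derive.
    + change (x * (x * x ^ N)) with (x ^ S (S N)). apply pow_nonzero, Hx.
    + change (match N with 0%nat => 1 | S _ => INR N + 1 end) with (INR (S N)).
      unfold coef_derive, coef_shift. rewrite !S_INR. simpl. field.
      repeat split; try apply pow_nonzero; exact Hx.
Qed.

Lemma pow_mul_principal_part (b : nat -> R) N x :
  x <> 0 -> x ^ S N * principal_part b N x = sum_f_R0 (fun k => b (N - k)%nat * x ^ k) N.
Proof.
  intro Hx. unfold principal_part. induction N as [|N IH].
  - simpl. field. exact Hx.
  - rewrite tech5, Rmult_plus_distr_l, (decomp_sum _ (S N)) by lia.
    replace (x ^ S (S N) * sum_f_R0 (fun k => b k / x ^ S k) N)
      with (x * (x ^ S N * sum_f_R0 (fun k => b k / x ^ S k) N)) by (simpl; ring).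
    rewrite IH, scal_sum. simpl pred. rewrite Nat.sub_0_r.
    replace (x ^ S (S N) * (b (S N) / x ^ S (S N))) with (b (S N))
      by (field; apply pow_nonzero, Hx).
    rewrite Rplus_comm. simpl (x ^ 0). rewrite Rmult_1_r. f_equal.
    apply sum_eq. intros i Hi. simpl. ring.
Qed.

Lemma sum_pow_0 (a : nat -> R) N : sum_f_R0 (fun k => a k * 0 ^ k) N = a O.
Proof.
  induction N as [|N IH]; [simpl; ring|]. rewrite tech5, IH. simpl. ring.
Qed.

Lemma principal_part_pseries_top (b c : nat -> R) N r :
  0 < r -> (forall x, 0 < Rabs x < r -> is_pseries c x (principal_part b N x)) -> b N = 0.
Proof.
  intros Hr H.
  assert (Hrad : Rbar_le r (CV_radius c)).
  { apply CV_radius_ge_of_ex_pseries; [exact Hr|]. intros x Hx. eexists. apply H, Hx. }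
  (* Multiplied by x^(N+1), the principal part becomes a polynomial with value b N at 0. *)
  assert (E : sum_f_R0 (fun k => b (N - k)%nat * 0 ^ k) N = 0 ^ S N * PSeries c 0).
  { apply (continuity_pt_punctured_eq (fun x => sum_f_R0 (fun k => b (N - k)%nat * x ^ k) N)
             (fun x => x ^ S N * PSeries c x) 0 r Hr).
    - apply continuity_finite_sum.
    - apply continuity_pt_mult; [apply derivable_continuous_pt, derivable_pt_pow|].
      apply PSeries_continuity, (Rabs_lt_CV_radius _ r); [exact Hrad|rewrite Rabs_R0; exact Hr].
    - intros x Hx. rewrite Rminus_0_r in Hx.
      assert (Hx0 : x <> 0) by (intros ->; rewrite Rabs_R0 in Hx; lra).
      rewrite (is_pseries_unique _ _ _ (H x Hx)), pow_mul_principal_part by exact Hx0.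
      reflexivity. }
  rewrite sum_pow_0, Nat.sub_0_r in E. rewrite E. simpl. ring.
Qed.

Lemma principal_part_pseries_coef_0 (b c : nat -> R) N r :
  0 < r -> (forall x, 0 < Rabs x < r -> is_pseries c x (principal_part b N x)) ->
  forall k, (k <= N)%nat -> b k = 0.
Proof.
  revert b. induction N as [|N IH]; intros b Hr H k Hk.
  - replace k with O by lia. exact (principal_part_pseries_top b c O r Hr H).
  - assert (Htop := principal_part_pseries_top b c (S N) r Hr H).
    destruct (Nat.eq_dec k (S N)) as [->|Hne]; [exact Htop|].
    apply (IH b Hr); [|lia]. intros x Hx.
    specialize (H x Hx). unfold principal_part in H. rewrite tech5, Htop in H.
    unfold Rdiv in H. rewrite Rmult_0_l, Rplus_0_r in H. exact H.
Qed.

Lemma laurent_principal_part_unique (f : R -> R) (b b' c c' : nat -> R) N r :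
  0 < r ->
  (forall x, 0 < Rabs x < r -> is_pseries c x (f x - principal_part b N x)) ->
  (forall x, 0 < Rabs x < r -> is_pseries c' x (f x - principal_part b' N x)) ->
  forall k, (k <= N)%nat -> b k = b' k.
Proof.
  intros Hr H H' k Hk. apply Rminus_diag_uniq.
  apply (principal_part_pseries_coef_0 (fun k => b k - b' k) (PS_minus c' c) N r Hr); [|exact Hk].
  intros x Hx. rewrite principal_part_minus.
  replace (principal_part b N x - principal_part b' N x)
    with (plus (f x - principal_part b' N x) (opp (f x - principal_part b N x)))
    by (unfold plus, opp; simpl; ring).
  apply (@is_pseries_minus R_AbsRing R_NormedModule); [apply H' | apply H]; exact Hx.
Qed.

Lemma laurent_principal_part_eq (f : R -> R) (b b' c c' : nat -> R) N N' r r' :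
  0 < r -> 0 < r' ->
  (forall x, 0 < Rabs x < r -> is_pseries c x (f x - principal_part b N x)) ->
  (forall x, 0 < Rabs x < r' -> is_pseries c' x (f x - principal_part b' N' x)) ->
  forall y, principal_part b N y = principal_part b' N' y.
Proof.
  intros Hr Hr' H H' y. set (L := Nat.max N N').
  rewrite <- (principal_part_trunc b N L), <- (principal_part_trunc b' N' L) by lia.
  apply sum_eq. intros k Hk. f_equal.
  apply (laurent_principal_part_unique f _ _ c c' L (Rmin r r'));
    [now apply Rmin_case | | | exact Hk];
    intros x Hx; rewrite principal_part_trunc by lia;
    [apply H | apply H']; generalize (Rmin_l r r') (Rmin_r r r'); lra.
Qed.

(** * The power series [Q] and [K = Q^(-1/2)] *)

Definition q_coef (n : nat) : R := 2 * (-1) ^ n / INR (n + 2).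

Definition Q (x : R) : R := PSeries q_coef x.
Definition dQ (x : R) : R := PSeries (PS_derive q_coef) x.

Lemma q_coef_0 : q_coef 0 = 1.
Proof. unfold q_coef. simpl. field. Qed.

Lemma Rabs_q_coef_le n : Rabs (q_coef n) <= 1.
Proof.
  unfold q_coef. rewrite plus_INR. simpl (INR 2).
  assert (0 <= INR n) by apply pos_INR.
  unfold Rdiv. rewrite !Rabs_mult, Rabs_inv, pow_1_abs, (Rabs_pos_eq 2),
    (Rabs_pos_eq (INR n + (1 + 1))) by lra.
  apply (Rmult_le_reg_r (INR n + (1 + 1))); [lra|]. field_simplify; lra.
Qed.

Lemma Rabs_PS_derive_q_coef_le n : Rabs (PS_derive q_coef n) <= 2.
Proof.
  unfold PS_derive, q_coef. rewrite plus_INR, !S_INR. simpl (INR 2).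
  assert (0 <= INR n) by apply pos_INR.
  unfold Rdiv. rewrite !Rabs_mult, Rabs_inv, pow_1_abs. simpl (INR 0).
  rewrite (Rabs_pos_eq 2), (Rabs_pos_eq (INR n + 1)),
    (Rabs_pos_eq (INR n + 1 + (0 + 1 + 1))) by lra.
  apply (Rmult_le_reg_r (INR n + 1 + (1 + 1))); [lra|]. field_simplify; lra.
Qed.

Lemma Rabs_lt_CV_radius_q_coef x : Rabs x < 1 -> Rbar_lt (Rabs x) (CV_radius q_coef).
Proof.
  apply Rabs_lt_CV_radius, (CV_radius_ge_of_bounded _ _ 1).
  intro n. rewrite pow1, Rmult_1_r. apply Rabs_q_coef_le.
Qed.

Lemma is_derive_Q x : Rabs x < 1 -> is_derive Q x (dQ x).
Proof. intro H. apply is_derive_PSeries, Rabs_lt_CV_radius_q_coef, H. Qed.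

Lemma Q_0 : Q 0 = 1.
Proof. unfold Q. rewrite PSeries_0. apply q_coef_0. Qed.

Lemma is_pseries_inv_1_plus x :
  Rabs x < 1 -> is_pseries (fun n => (-1) ^ n) x (/ (1 + x)).
Proof.
  intro H. replace (1 + x) with (1 - - x) by ring.
  eapply is_series_ext; [|apply is_series_geom; rewrite Rabs_Ropp; exact H].
  intro n. rewrite pow_n_pow. unfold scal; simpl. unfold mult; simpl.
  rewrite <- Rpow_mult_distr. f_equal. ring.
Qed.

Lemma Q_ode x : Rabs x < 1 -> Q x + x * dQ x / 2 = / (1 + x).
Proof.
  intro H.
  assert (Hin := Rabs_lt_CV_radius_q_coef x H).
  assert (HQ : is_pseries q_coef x (Q x)) by apply PSeries_correct, CV_radius_inside, Hin.
  assert (HdQ : is_pseries (PS_derive q_coef) x (dQ x)).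
  { apply PSeries_correct, CV_radius_inside. rewrite CV_radius_derive. exact Hin. }
  apply is_pseries_incr_1, (is_pseries_scal (/ 2)) in HdQ; [|unfold mult; simpl; ring].
  assert (Hsum := is_pseries_plus _ _ _ _ _ HQ HdQ).
  rewrite <- (is_pseries_unique _ _ _ (is_pseries_inv_1_plus x H)).
  replace (Q x + x * dQ x / 2) with (Q x + / 2 * (x * dQ x)) by field.
  apply is_pseries_unique in Hsum. unfold plus, scal in Hsum; simpl in Hsum.
  unfold mult in Hsum; simpl in Hsum. rewrite <- Hsum. apply PSeries_ext. intros [|n].
  - change (q_coef 0 + / 2 * 0 = (-1) ^ 0). rewrite q_coef_0. simpl. field.
  - change (q_coef (S n) + / 2 * (INR (S n) * q_coef (S n)) = (-1) ^ S n). unfold q_coef.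
    rewrite plus_INR, S_INR. simpl (INR 2).
    assert (0 <= INR n) by apply pos_INR. field. lra.
Qed.

Lemma Q_ln x : Rabs x < 1 -> x ^ 2 * Q x / 2 = x - ln (1 + x).
Proof.
  intro Hx.
  set (M := fun t => t ^ 2 * Q t / 2 - (t - ln (1 + t))).
  enough (E : M x = M 0) by (unfold M in E; rewrite Rplus_0_r, ln_1 in E; lra).
  apply is_derive_0_eq. intros t Ht. rewrite !Rminus_0_r in Ht.
  assert (Htx : Rabs t < 1) by lra.
  assert (Ht1 : -1 < t) by (apply Rabs_def2 in Htx; lra).
  unfold M. auto_derive.
  - repeat split; [eexists; apply is_derive_Q, Htx | lra].
  - change (fun y => Q y) with Q. rewrite (is_derive_unique Q t _ (is_derive_Q t Htx)).
    assert (E := Q_ode t Htx).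
    replace (Q t) with (/ (1 + t) - t * dQ t / 2) by lra.
    field. lra.
Qed.

(* The coefficients of [K = Q^(-1/2)], determined by [K(0) = 1] and [2 Q K' + Q' K = 0]:
   [k_coef_next n f] is the coefficient of x^(n+1) computed from those of degree <= n. *)
Definition k_coef_next (n : nat) (f : nat -> R) : R :=
  - (2 * sum_f_R0 (fun i => q_coef (S i) * INR (n - i) * f (n - i)%nat) n
     + sum_f_R0 (fun i => PS_derive q_coef i * f (n - i)%nat) n) / (2 * INR (S n)).

(* Course-of-values recursion: [k_coef_upto n] tabulates the coefficients of degree <= n. *)
Fixpoint k_coef_upto (n : nat) : nat -> R :=
  match n with
  | O => fun _ => 1
  | S m => fun k => if (k <=? m)%nat then k_coef_upto m k else k_coef_next m (k_coef_upto m)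
  end.

Definition k_coef (n : nat) : R := k_coef_upto n n.

Lemma k_coef_upto_le m k : (k <= m)%nat -> k_coef_upto m k = k_coef k.
Proof.
  revert k. induction m as [|m IH]; intros k Hk.
  - now replace k with O by lia.
  - destruct (Nat.eq_dec k (S m)) as [->|Hne]; [reflexivity|]. simpl.
    replace (k <=? m)%nat with true by (symmetry; apply Nat.leb_le; lia).
    apply IH. lia.
Qed.

Lemma k_coef_0 : k_coef 0 = 1.
Proof. reflexivity. Qed.

Lemma k_coef_S n : k_coef (S n) = k_coef_next n k_coef.
Proof.
  unfold k_coef at 1.
  change (k_coef_upto (S n) (S n)) with
    (if (S n <=? n)%nat then k_coef_upto n (S n) else k_coef_next n (k_coef_upto n)).
  replace (S n <=? n)%nat with false by (symmetry; apply Nat.leb_gt; lia).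
  unfold k_coef_next.
  rewrite (sum_eq (fun i => _ * k_coef_upto n (n - i)%nat) (fun i => _ * k_coef (n - i)%nat)),
    (sum_eq (fun i => _ * k_coef_upto n (n - i)%nat) (fun i => _ * k_coef (n - i)%nat))
    by (intros i Hi; rewrite k_coef_upto_le by lia; reflexivity).
  reflexivity.
Qed.

Lemma k_coef_ode n :
  2 * PS_mult q_coef (PS_derive k_coef) n + PS_mult (PS_derive q_coef) k_coef n = 0.
Proof.
  assert (E : PS_mult q_coef (PS_derive k_coef) n = INR (S n) * k_coef (S n)
            + sum_f_R0 (fun i => q_coef (S i) * INR (n - i) * k_coef (n - i)%nat) n).
  { unfold PS_mult. destruct n as [|n].
    - simpl. unfold PS_derive. rewrite q_coef_0. simpl. ring.
    - rewrite decomp_sum by lia. simpl pred.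
      rewrite q_coef_0. unfold PS_derive at 1. rewrite Nat.sub_0_r, tech5, Nat.sub_diag.
      simpl (INR 0). rewrite Rmult_0_r, Rmult_0_l, Rplus_0_r, Rmult_1_l. f_equal.
      apply sum_eq. intros i Hi. unfold PS_derive.
      replace (S (S n - S i)) with (S n - i)%nat by lia. ring. }
  rewrite E, k_coef_S. unfold k_coef_next, PS_mult.
  field. rewrite S_INR. assert (0 <= INR n) by apply pos_INR. lra.
Qed.

Lemma sum_pow_4_le n : sum_f_R0 (fun i => 4 ^ (n - i)) n <= 4 ^ S n / 3.
Proof.
  enough (E : sum_f_R0 (fun i => 4 ^ (n - i)) n = (4 ^ S n - 1) / 3) by lra.
  induction n as [|n IH]; [simpl; field|].
  rewrite tech5, Nat.sub_diag, (sum_eq _ (fun i => 4 ^ (n - i) * 4)).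
  - rewrite <- scal_sum, IH. simpl. field.
  - intros i Hi. replace (S n - i)%nat with (S (n - i)) by lia. simpl. ring.
Qed.

Lemma Rabs_convolution_le (u a : nat -> R) (M : R) n :
  (forall i, (i <= n)%nat -> Rabs (u i) <= M) ->
  (forall k, (k <= n)%nat -> Rabs (a k) <= 4 ^ k) ->
  Rabs (sum_f_R0 (fun i => u i * a (n - i)%nat) n) <= M * (4 ^ S n / 3).
Proof.
  intros Hu Ha.
  assert (HM : 0 <= M) by (apply Rle_trans with (Rabs (u O)); [apply Rabs_pos|apply Hu; lia]).
  eapply Rle_trans; [apply Rsum_abs|].
  eapply Rle_trans; [apply (sum_Rle _ (fun i => 4 ^ (n - i) * M))|].
  - intros i Hi. rewrite Rabs_mult, Rmult_comm.
    apply Rmult_le_compat; try apply Rabs_pos; [apply Ha | apply Hu]; lia.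
  - rewrite <- scal_sum. apply Rmult_le_compat_l, sum_pow_4_le. exact HM.
Qed.

Lemma Rabs_k_coef_le n : Rabs (k_coef n) <= 4 ^ n.
Proof.
  enough (H : forall m k, (k <= m)%nat -> Rabs (k_coef k) <= 4 ^ k) by (apply (H n); lia).
  induction m as [|m IH]; intros k Hk.
  - replace k with O by lia. rewrite k_coef_0, Rabs_R1. simpl. lra.
  - destruct (Nat.eq_dec k (S m)) as [->|Hne]; [|apply IH; lia].
    assert (Hm : 0 <= INR m) by apply pos_INR.
    assert (H1 : Rabs (sum_f_R0 (fun i => q_coef (S i) * INR (m - i) * k_coef (m - i)%nat) m)
                 <= INR m * (4 ^ S m / 3)).
    { apply (Rabs_convolution_le (fun i => q_coef (S i) * INR (m - i))); [|exact IH].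
      intros i Hi. rewrite Rabs_mult, <- (Rmult_1_l (INR m)).
      apply Rmult_le_compat; try apply Rabs_pos; [apply Rabs_q_coef_le|].
      rewrite Rabs_pos_eq by apply pos_INR. apply le_INR. lia. }
    assert (H2 := Rabs_convolution_le (PS_derive q_coef) k_coef 2 m
                    (fun i _ => Rabs_PS_derive_q_coef_le i) IH).
    rewrite k_coef_S. unfold k_coef_next, Rdiv.
    rewrite Rabs_mult, Rabs_Ropp, Rabs_inv, (Rabs_pos_eq (2 * INR (S m)))
      by (rewrite S_INR; lra).
    rewrite S_INR. apply (Rmult_le_reg_r (2 * (INR m + 1))); [lra|].
    rewrite Rmult_assoc, Rinv_l, Rmult_1_r by lra.
    eapply Rle_trans; [apply Rabs_triang|]. rewrite Rabs_mult, (Rabs_pos_eq 2) by lra.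
    assert (0 <= 4 ^ S m) by (apply pow_le; lra). nra.
Qed.

Lemma CV_radius_k_coef : Rbar_le (/ 4) (CV_radius k_coef).
Proof.
  apply (CV_radius_ge_of_bounded _ _ 1). intro n.
  rewrite Rabs_mult, <- RPow_abs, Rabs_inv, (Rabs_pos_eq 4), pow_inv by lra.
  apply (Rmult_le_reg_r (4 ^ n)); [apply pow_lt; lra|].
  rewrite Rmult_assoc, Rinv_l, Rmult_1_r, Rmult_1_l by (apply pow_nonzero; lra).
  apply Rabs_k_coef_le.
Qed.

Definition K (x : R) : R := PSeries k_coef x.
Definition dK (x : R) : R := PSeries (PS_derive k_coef) x.

Lemma Rabs_lt_CV_radius_k_coef x : Rabs x < / 4 -> Rbar_lt (Rabs x) (CV_radius k_coef).
Proof. apply Rabs_lt_CV_radius, CV_radius_k_coef. Qed.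

Lemma is_derive_K x : Rabs x < / 4 -> is_derive K x (dK x).
Proof. intro H. apply is_derive_PSeries, Rabs_lt_CV_radius_k_coef, H. Qed.

Lemma K_0 : K 0 = 1.
Proof. unfold K. rewrite PSeries_0. apply k_coef_0. Qed.

Lemma K_ode x : Rabs x < / 4 -> 2 * Q x * dK x + dQ x * K x = 0.
Proof.
  intro H.
  assert (Hq := Rabs_lt_CV_radius_q_coef x ltac:(lra)).
  assert (Hk := Rabs_lt_CV_radius_k_coef x H).
  assert (Hdq : Rbar_lt (Rabs x) (CV_radius (PS_derive q_coef)))
    by (rewrite CV_radius_derive; exact Hq).
  assert (Hdk : Rbar_lt (Rabs x) (CV_radius (PS_derive k_coef)))
    by (rewrite CV_radius_derive; exact Hk).
  unfold Q, dK, dQ, K.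
  rewrite Rmult_assoc, <- (PSeries_mult q_coef (PS_derive k_coef)),
    <- (PSeries_mult (PS_derive q_coef) k_coef), <- PSeries_scal, <- PSeries_plus
    by (try apply ex_pseries_scal; try intros; try apply ex_pseries_mult;
        try (unfold mult; simpl; ring); assumption).
  rewrite <- (PSeries_const_0 x). apply PSeries_ext. intro n.
  unfold PS_plus, PS_scal, plus, scal; simpl. unfold mult; simpl. apply k_coef_ode.
Qed.

Lemma K_sqr_mul_Q x : Rabs x < / 4 -> K x ^ 2 * Q x = 1.
Proof.
  intro Hx.
  set (M := fun t => K t ^ 2 * Q t).
  enough (E : M x = M 0) by (unfold M in E; rewrite E, K_0, Q_0; ring).
  apply is_derive_0_eq. intros t Ht. rewrite !Rminus_0_r in Ht.
  assert (Htx : Rabs t < / 4) by lra.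
  unfold M. auto_derive.
  - repeat split; eexists; [apply is_derive_K, Htx | apply is_derive_Q; lra].
  - change (fun y => Q y) with Q. change (fun y => K y) with K.
    rewrite (is_derive_unique Q t _ (is_derive_Q t ltac:(lra))),
      (is_derive_unique K t _ (is_derive_K t Htx)).
    transitivity (K t * (2 * Q t * dK t + dQ t * K t)); [ring|].
    rewrite K_ode by exact Htx. ring.
Qed.

Lemma K_pos x : Rabs x < / 4 -> 0 < K x.
Proof.
  intro Hx. apply (pos_of_nonvanishing K 0); [|rewrite K_0; lra].
  intros t Ht.
  assert (Htx : Rabs t < / 4).
  { apply Rabs_def1; revert Ht; apply Rmin_case; apply Rmax_case; intros;
      apply Rabs_def2 in Hx; lra. }
  split; [apply (is_derive_continuity_pt _ _ _ (is_derive_K t Htx))|].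
  intro E. generalize (K_sqr_mul_Q t Htx). rewrite E. simpl. lra.
Qed.

Lemma eta_1_plus x : 0 < Rabs x < / 4 -> eta (1 + x) = x / K x.
Proof.
  intro Hx.
  assert (Hx0 : x <> 0) by (intros ->; rewrite Rabs_R0 in Hx; lra).
  assert (Hk := K_pos x ltac:(lra)).
  assert (HQ := K_sqr_mul_Q x ltac:(lra)).
  unfold eta. replace (1 + x - 1) with x by ring.
  rewrite <- Q_ln by lra.
  replace (2 * (x ^ 2 * Q x / 2) / x ^ 2) with ((/ K x) ^ 2)
    by (field_simplify_eq; [nra | lra]).
  rewrite sqrt_pow2 by (apply Rlt_le, Rinv_0_lt_compat, Hk). field. lra.
Qed.

Lemma stir_g_K x : Rabs x < / 4 -> stir_g x = K x ^ 2.
Proof.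
  intro Hx. unfold stir_g. destruct (Req_EM_T x 0) as [->|E]; [rewrite K_0; ring|].
  assert (HQ := K_sqr_mul_Q x Hx). rewrite <- Q_ln by lra.
  field_simplify_eq; [nra|]. split; [|lra].
  intro Z. rewrite Z in HQ. lra.
Qed.

Lemma Rpower_stir_g x j :
  Rabs x < / 4 -> Rpower (stir_g x) (INR j + / 2) = K x ^ (2 * j + 1).
Proof.
  intro Hx. rewrite stir_g_K by exact Hx.
  assert (Hk2 : 0 < K x ^ 2) by (apply pow_lt, K_pos, Hx).
  rewrite Rpower_plus, Rpower_pow, Rpower_sqrt, sqrt_pow2 by (auto; apply Rlt_le, K_pos, Hx).
  rewrite <- pow_mult, pow_add, pow_1. reflexivity.
Qed.

(* [k_pow_coef m] are the coefficients of [K^(m+1)]. *)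
Fixpoint k_pow_coef (m : nat) : nat -> R :=
  match m with
  | O => k_coef
  | S m' => PS_mult k_coef (k_pow_coef m')
  end.

Lemma is_pseries_k_pow_coef m :
  Rbar_le (/ 4) (CV_radius (k_pow_coef m)) /\
  forall x, Rabs x < / 4 -> is_pseries (k_pow_coef m) x (K x ^ S m).
Proof.
  induction m as [|m [IHr IHs]].
  - split; [apply CV_radius_k_coef|]. intros x Hx. rewrite pow_1.
    apply PSeries_correct, CV_radius_inside, Rabs_lt_CV_radius_k_coef, Hx.
  - assert (Hs : forall x, Rabs x < / 4 -> is_pseries (k_pow_coef (S m)) x (K x ^ S (S m))).
    { intros x Hx. apply is_pseries_mult.
      + apply PSeries_correct, CV_radius_inside, Rabs_lt_CV_radius_k_coef, Hx.
      + apply IHs, Hx.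
      + apply Rabs_lt_CV_radius_k_coef, Hx.
      + apply (Rabs_lt_CV_radius _ (/ 4)); assumption. }
    split; [|exact Hs].
    apply CV_radius_ge_of_ex_pseries; [lra|]. intros x Hx. eexists. apply Hs. lra.
Qed.

Lemma Rabs_lt_CV_radius_k_pow_coef m x :
  Rabs x < / 4 -> Rbar_lt (Rabs x) (CV_radius (k_pow_coef m)).
Proof. apply Rabs_lt_CV_radius, is_pseries_k_pow_coef. Qed.

Lemma PSeries_k_pow_coef m x : Rabs x < / 4 -> PSeries (k_pow_coef m) x = K x ^ S m.
Proof. intro H. apply is_pseries_unique, is_pseries_k_pow_coef, H. Qed.

Lemma fact_double j :
  INR (Factorial.fact (2 * j)) = 2 ^ j * INR (Factorial.fact j) * INR (odd_dfact j).
Proof.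
  induction j as [|j IH]; [simpl; ring|].
  replace (2 * S j)%nat with (S (S (2 * j))) by lia.
  change (Factorial.fact (S (S (2 * j))))
    with (S (S (2 * j)) * (S (2 * j) * Factorial.fact (2 * j)))%nat.
  change (Factorial.fact (S j)) with (S j * Factorial.fact j)%nat.
  change (odd_dfact (S j)) with ((2 * j + 1) * odd_dfact j)%nat.
  rewrite !mult_INR, IH, !S_INR, plus_INR, mult_INR. simpl. ring.
Qed.

Lemma gamma_st_k_pow_coef j :
  gamma_st j = (-1) ^ j * INR (odd_dfact j) * k_pow_coef (2 * j) (2 * j).
Proof.
  unfold gamma_st.
  rewrite (Derive_n_ext_loc _ (PSeries (k_pow_coef (2 * j)))).
  - rewrite Derive_n_coef, fact_double.
    + field. split; [apply not_0_INR, Nat.neq_0_lt_0, Factorial.lt_O_fact|].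
      apply pow_nonzero. lra.
    + rewrite <- Rabs_R0. apply Rabs_lt_CV_radius_k_pow_coef. rewrite Rabs_R0. lra.
  - apply (locally_of_Rabs_lt 0 (/ 4)); [lra|]. intros y Hy. rewrite Rminus_0_r in Hy.
    rewrite Rpower_stir_g, PSeries_k_pow_coef by exact Hy. f_equal. lia.
Qed.

(** * Laurent expansion of [phi_j] *)

Definition phi_const (j : nat) : R := (-1) ^ S j * INR (odd_dfact j).

(* Only [k <= 2j] matters: beyond that, [2 * j - k] truncates to 0. *)
Definition phi_pp_coef (j k : nat) : R := phi_const j * k_pow_coef (2 * j) (2 * j - k).

Definition phi_reg_coef (j n : nat) : R := phi_const j * k_pow_coef (2 * j) (S (2 * j) + n).

Lemma phi_const_S j : phi_const (S j) = - INR (2 * j + 1) * phi_const j.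
Proof.
  unfold phi_const. change (odd_dfact (S j)) with ((2 * j + 1) * odd_dfact j)%nat.
  rewrite mult_INR. simpl. ring.
Qed.

(* [phi_j (1 + x) = phi_const j * (K x / x)^(2j+1)]. *)
Lemma phi_laurent j x : 0 < Rabs x < / 4 ->
  is_pseries (phi_reg_coef j) x (phi j (1 + x) - principal_part (phi_pp_coef j) (2 * j) x).
Proof.
  intro Hx. set (N := (2 * j)%nat). set (a := k_pow_coef N).
  assert (Hx0 : x <> 0) by (intros ->; rewrite Rabs_R0 in Hx; lra).
  assert (HxN : x ^ S N <> 0) by (apply pow_nonzero, Hx0).
  assert (Hk : 0 < K x) by (apply K_pos; lra).
  assert (Hex : ex_pseries a x)
    by (apply CV_radius_inside, Rabs_lt_CV_radius_k_pow_coef; lra).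
  assert (HK := PSeries_decr_n a N x Hex).
  unfold a in HK. rewrite PSeries_k_pow_coef in HK by lra. fold a in HK.
  assert (Hpp : x ^ S N * principal_part (phi_pp_coef j) N x
                = phi_const j * sum_f_R0 (fun k => a k * x ^ k) N).
  { rewrite pow_mul_principal_part, scal_sum by exact Hx0. apply sum_eq. intros k Hk'.
    unfold phi_pp_coef. fold N a. rewrite Nat.sub_sub_distr, Nat.sub_diag, Nat.add_0_l by lia.
    ring. }
  assert (Hval : phi j (1 + x) - principal_part (phi_pp_coef j) N x
                 = phi_const j * PSeries (PS_decr_n a (S N)) x).
  { unfold phi. rewrite eta_1_plus by exact Hx.
    replace (2 * j + 1)%nat with (S N) by (unfold N; lia). fold (phi_const j).
    apply (Rmult_eq_reg_l (x ^ S N)); [|exact HxN].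
    rewrite Rmult_minus_distr_l, Hpp.
    replace (x ^ S N * (phi_const j / (x / K x) ^ S N)) with (phi_const j * K x ^ S N)
      by (unfold Rdiv; rewrite Rpow_mult_distr, pow_inv; field;
          split; [apply pow_nonzero; lra | exact HxN]).
    rewrite HK. ring. }
  fold N. rewrite Hval.
  assert (Hdecr : ex_pseries (PS_decr_n a (S N)) x).
  { apply ex_pseries_decr_n; [|exact Hex].
    right. exists (/ x). unfold mult, one; simpl. field. exact Hx0. }
  apply PSeries_correct, (is_pseries_scal (phi_const j)) in Hdecr; [|unfold mult; simpl; ring].
  exact Hdecr.
Qed.

(** * [eta] as a function of [lambda] *)

Definition half_eta_sq (l : R) : R := l - 1 - ln l.

Lemma ln_lt_sub_1 y : 0 < y -> y <> 1 -> ln y < y - 1.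
Proof.
  intros Hy H1.
  assert (Hl : ln y <> 0) by (intro E; apply H1; rewrite <- (exp_ln y Hy), E, exp_0; reflexivity).
  generalize (exp_ineq1 (ln y) Hl). rewrite exp_ln by exact Hy. lra.
Qed.

Lemma half_eta_sq_pos l : 0 < l -> l <> 1 -> 0 < half_eta_sq l.
Proof. intros Hl H1. unfold half_eta_sq. generalize (ln_lt_sub_1 l Hl H1). lra. Qed.

Lemma half_eta_sq_sub_gt a b :
  0 < a -> 0 < b -> a <> b -> (b - a) * (1 - / a) < half_eta_sq b - half_eta_sq a.
Proof.
  intros Ha Hb Hab.
  assert (Hba : b / a <> 1) by (intro E; apply Hab; field_simplify_eq in E; lra).
  generalize (ln_lt_sub_1 (b / a) ltac:(apply Rdiv_lt_0_compat; lra) Hba).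
  rewrite ln_div by lra. unfold half_eta_sq.
  replace (b / a - 1) with ((b - a) / a) by (field; lra).
  replace ((b - a) * (1 - / a)) with (b - a - (b - a) / a) by (field; lra). lra.
Qed.

Lemma eta_gt_1 l : 1 < l -> eta l = sqrt (2 * half_eta_sq l).
Proof.
  intro Hl. unfold eta, half_eta_sq.
  rewrite sqrt_div_alt, sqrt_pow2 by (try apply pow_lt; lra). field. lra.
Qed.

Lemma eta_lt_1 l : 0 < l -> l < 1 -> eta l = - sqrt (2 * half_eta_sq l).
Proof.
  intros H0 Hl. unfold eta, half_eta_sq.
  replace ((l - 1) ^ 2) with ((1 - l) ^ 2) by ring.
  rewrite sqrt_div_alt, sqrt_pow2 by (try apply pow_lt; lra). field. lra.
Qed.

Lemma eta_1 : eta 1 = 0.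
Proof. unfold eta. ring. Qed.

Lemma eta_increasing a b : 0 < a -> a < b -> eta a < eta b.
Proof.
  intros Ha Hab.
  assert (Hsq : forall l, 0 < l -> l <> 1 -> 0 < sqrt (2 * half_eta_sq l))
    by (intros l Hl H1; apply sqrt_lt_R0; generalize (half_eta_sq_pos l Hl H1); lra).
  destruct (Rtotal_order b 1) as [Hb|[->|Hb]].
  - rewrite (eta_lt_1 a), (eta_lt_1 b) by lra.
    generalize (half_eta_sq_sub_gt b a ltac:(lra) Ha ltac:(lra)).
    assert (1 < / b) by (rewrite <- Rinv_1; apply Rinv_lt_contravar; lra).
    intro. apply Ropp_lt_contravar, sqrt_lt_1_alt.
    generalize (half_eta_sq_pos b ltac:(lra) ltac:(lra)). nra.
  - rewrite eta_1, eta_lt_1 by lra. generalize (Hsq a Ha ltac:(lra)). lra.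
  - rewrite (eta_gt_1 b) by lra.
    destruct (Rtotal_order a 1) as [Ha1|[->|Ha1]].
    + rewrite eta_lt_1 by lra. generalize (Hsq a Ha ltac:(lra)) (Hsq b ltac:(lra) ltac:(lra)).
      lra.
    + rewrite eta_1. apply Hsq; lra.
    + rewrite eta_gt_1 by lra. apply sqrt_lt_1_alt.
      generalize (half_eta_sq_sub_gt a b Ha ltac:(lra) ltac:(lra)).
      assert (/ a < 1) by (rewrite <- Rinv_1; apply Rinv_lt_contravar; lra).
      generalize (half_eta_sq_pos a Ha ltac:(lra)). nra.
Qed.

Lemma eta_inj a b : 0 < a -> 0 < b -> eta a = eta b -> a = b.
Proof.
  intros Ha Hb E. destruct (Rtotal_order a b) as [H|[H|H]]; [|exact H|].
  - generalize (eta_increasing a b Ha H). lra.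
  - generalize (eta_increasing b a Hb H). lra.
Qed.

Lemma lam_of_eta l : 0 < l -> lam_of (eta l) = l.
Proof.
  intro Hl. unfold lam_of.
  destruct (epsilon_spec (inhabits 1) (fun l' => 0 < l' /\ eta l' = eta l)
              (ex_intro _ l (conj Hl eq_refl))) as [H1 H2].
  apply eta_inj; assumption.
Qed.

Lemma eta_neq_0 l : 0 < l -> l <> 1 -> eta l <> 0.
Proof. intros Hl H1 E. rewrite <- eta_1 in E. apply H1, eta_inj; lra. Qed.

Lemma is_derive_eta l : 0 < l -> l <> 1 -> is_derive eta l ((l - 1) / (l * eta l)).
Proof.
  intros Hl H1.
  assert (Hh := half_eta_sq_pos l Hl H1).
  assert (Hs : 0 < sqrt (2 * half_eta_sq l)) by (apply sqrt_lt_R0; lra).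
  unfold half_eta_sq in Hh, Hs.
  destruct (Rlt_or_le 1 l) as [Hg|Hle].
  - apply (is_derive_ext_loc (fun t => sqrt (2 * (t - 1 - ln t)))).
    + apply (locally_of_Rabs_lt l (l - 1)); [lra|]. intros y Hy. apply Rabs_def2 in Hy.
      rewrite eta_gt_1 by lra. reflexivity.
    + rewrite eta_gt_1 by lra. unfold half_eta_sq. auto_derive.
      * repeat split; lra.
      * replace (l + - (1) + - ln l) with (l - 1 - ln l) by ring. field. lra.
  - apply (is_derive_ext_loc (fun t => - sqrt (2 * (t - 1 - ln t)))).
    + apply (locally_of_Rabs_lt l (Rmin l (1 - l))); [apply Rmin_case; lra|].
      intros y Hy. apply Rabs_def2 in Hy.
      generalize (Rmin_l l (1 - l)) (Rmin_r l (1 - l)). intros.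
      rewrite eta_lt_1 by lra. reflexivity.
    + rewrite eta_lt_1 by lra. unfold half_eta_sq. auto_derive.
      * repeat split; lra.
      * replace (l + - (1) + - ln l) with (l - 1 - ln l) by ring. field. lra.
Qed.

Lemma eta_local_inverse l0 : 0 < l0 -> l0 <> 1 ->
  exists lb ub, lb < l0 < ub /\ (forall t, lb <= t <= ub -> 0 < t /\ t <> 1) /\
    forall e, eta lb <= e <= eta ub -> lb <= lam_of e <= ub /\ eta (lam_of e) = e.
Proof.
  intros Hl0 H10.
  set (d := Rmin l0 (Rabs (l0 - 1)) / 2).
  assert (Hd0 : 0 < Rabs (l0 - 1)) by (apply Rabs_pos_lt; lra).
  assert (Hd : 0 < d) by (unfold d; apply Rmin_case; lra).
  assert (Hd1 : d < l0) by (generalize (Rmin_l l0 (Rabs (l0 - 1))); unfold d; lra).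
  assert (Hd2 : d < Rabs (l0 - 1)) by (generalize (Rmin_r l0 (Rabs (l0 - 1))); unfold d; lra).
  assert (Hgood : forall t, l0 - d <= t <= l0 + d -> 0 < t /\ t <> 1).
  { intros t Ht. split; [lra|]. intros ->.
    destruct (Rle_or_lt 0 (l0 - 1));
      [rewrite Rabs_pos_eq in Hd2 | rewrite Rabs_left in Hd2]; lra. }
  exists (l0 - d), (l0 + d). split; [lra|]. split; [exact Hgood|].
  intros e He.
  destruct (Ranalysis5.f_interv_is_interv eta (l0 - d) (l0 + d) e ltac:(lra) He)
    as [t [Ht <-]].
  { intros t Ht. destruct (Hgood t Ht).
    apply (is_derive_continuity_pt _ _ _ (is_derive_eta t H H0)). }
  rewrite lam_of_eta by (apply Hgood, Ht). split; [exact Ht|reflexivity].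
Qed.

Lemma is_derive_lam_of l0 : 0 < l0 -> l0 <> 1 ->
  is_derive lam_of (eta l0) (l0 * eta l0 / (l0 - 1)).
Proof.
  intros Hl0 H10.
  destruct (eta_local_inverse l0 Hl0 H10) as (lb & ub & Hlu & Hgood & Hinv).
  assert (Hlb := Hgood lb ltac:(lra)). assert (Hub := Hgood ub ltac:(lra)).
  assert (Hincr : forall x y, lb <= x -> x < y -> y <= ub -> eta x < eta y)
    by (intros x y Hx Hxy Hy; apply eta_increasing; [apply (Hgood x); lra | exact Hxy]).
  assert (He0 : eta lb < eta l0 < eta ub) by (split; apply Hincr; lra).
  assert (Hcont : continuity_pt lam_of (eta l0)).
  { apply (Ranalysis5.continuity_pt_recip_interv eta lam_of lb ub); try lra.
    - exact Hincr.
    - intros x Hx1 Hx2. apply (Hinv x). lra.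
    - intros x Hx1 Hx2. apply (Hinv x). lra.
    - intros a Ha. destruct (Hgood a Ha).
      apply (is_derive_continuity_pt _ _ _ (is_derive_eta a H H0)). }
  assert (Prf : forall a, lam_of (eta lb) <= a <= lam_of (eta ub) -> derivable_pt eta a).
  { intros a Ha. rewrite !lam_of_eta in Ha by lra. destruct (Hgood a Ha).
    eexists. apply is_derive_Reals, is_derive_eta; assumption. }
  assert (Hrange : lam_of (eta lb) <= lam_of (eta l0) <= lam_of (eta ub))
    by (rewrite !lam_of_eta by lra; lra).
  assert (Hlim : derivable_pt_lim eta (lam_of (eta l0)) ((l0 - 1) / (l0 * eta l0)))
    by (rewrite lam_of_eta by lra; apply is_derive_Reals, is_derive_eta; assumption).
  assert (Hne : derive_pt eta (lam_of (eta l0)) (Prf _ Hrange) <> 0).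
  { rewrite (derive_pt_eq_0 _ _ _ _ Hlim). generalize (eta_neq_0 l0 Hl0 H10). intro.
    unfold Rdiv. apply Rmult_integral_contrapositive_currified; [lra|].
    apply Rinv_neq_0_compat, Rmult_integral_contrapositive_currified; lra. }
  assert (HL := Ranalysis5.derivable_pt_lim_recip_interv eta lam_of (eta lb) (eta ub)
                  (eta l0) Prf Hcont ltac:(lra) He0 Hrange (fun x Hx => proj2 (Hinv x Hx)) Hne).
  rewrite (derive_pt_eq_0 _ _ _ _ Hlim) in HL. apply is_derive_Reals in HL.
  replace (l0 * eta l0 / (l0 - 1)) with (1 / ((l0 - 1) / (l0 * eta l0))); [exact HL|].
  generalize (eta_neq_0 l0 Hl0 H10). intro. field. repeat split; lra.
Qed.

(* The rule [d/deta = (lambda eta / (lambda - 1)) d/dlambda]. *)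
Lemma is_derive_eta_comp (G C : R -> R) l0 dC : 0 < l0 -> l0 <> 1 ->
  (forall l, 0 < l -> l <> 1 -> G (eta l) = C l) -> is_derive C l0 dC ->
  is_derive G (eta l0) (dC * (l0 * eta l0 / (l0 - 1))).
Proof.
  intros Hl0 H10 HGC HC.
  destruct (eta_local_inverse l0 Hl0 H10) as (lb & ub & Hlu & Hgood & Hinv).
  assert (He0 : eta lb < eta l0 < eta ub)
    by (split; apply eta_increasing; try apply (Hgood lb); lra).
  apply (is_derive_ext_loc (fun e => C (lam_of e))).
  - apply (locally_of_Rabs_lt _ (Rmin (eta l0 - eta lb) (eta ub - eta l0)));
      [apply Rmin_case; lra|].
    intros e He. apply Rabs_def2 in He.
    generalize (Rmin_l (eta l0 - eta lb) (eta ub - eta l0))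
               (Rmin_r (eta l0 - eta lb) (eta ub - eta l0)). intros.
    destruct (Hinv e ltac:(lra)) as [Hle He'].
    destruct (Hgood _ Hle). rewrite <- He' at 2. symmetry. apply HGC; assumption.
  - rewrite Rmult_comm. apply (is_derive_comp C lam_of); [|apply is_derive_lam_of; assumption].
    rewrite lam_of_eta by exact Hl0. exact HC.
Qed.

(** * The recursion for [c_j] *)

Lemma is_derive_comp_add (f : R -> R) c x l :
  is_derive f (c + x) l -> is_derive (fun y => f (c + y)) x l.
Proof.
  intro H. replace l with (scal 1 l) by (unfold scal; simpl; unfold mult; simpl; ring).
  apply (is_derive_comp f (fun y => c + y)); [exact H|].
  auto_derive; [exact I | ring].
Qed.

Lemma is_derive_div_eta_pow c n l : 0 < l -> l <> 1 ->
  is_derive (fun t => c / eta t ^ S n) l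
    (- INR (S n) * c / eta l ^ S (S n) * ((l - 1) / (l * eta l))).
Proof.
  intros Hl H1.
  assert (He := is_derive_eta l Hl H1). assert (Hn := eta_neq_0 l Hl H1).
  auto_derive.
  - repeat split; [eexists; exact He|].
    apply Rmult_integral_contrapositive_currified; [exact Hn | apply pow_nonzero, Hn].
  - change (fun x => eta x) with eta. rewrite (is_derive_unique eta l _ He).
    change (match n with O => 1 | S _ => INR n + 1 end) with (INR (S n)).
    rewrite <- !tech_pow_Rmult. field. repeat split; try apply pow_nonzero; lra.
Qed.

Lemma is_derive_phi j l : 0 < l -> l <> 1 -> is_derive (phi j) l ((l - 1) / l * phi (S j) l).
Proof.
  intros Hl H1. assert (Hn := eta_neq_0 l Hl H1).
  apply (is_derive_ext (fun t => phi_const j / eta t ^ S (2 * j))).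
  { intro t. unfold phi. do 2 f_equal. lia. }
  replace ((l - 1) / l * phi (S j) l)
    with (- INR (S (2 * j)) * phi_const j / eta l ^ S (S (2 * j)) * ((l - 1) / (l * eta l))).
  - apply is_derive_div_eta_pow; assumption.
  - unfold phi. fold (phi_const (S j)). rewrite phi_const_S.
    replace (2 * S j + 1)%nat with (S (S (S (2 * j)))) by lia.
    replace (2 * j + 1)%nat with (S (2 * j)) by lia.
    rewrite <- !tech_pow_Rmult. field. repeat split; try apply pow_nonzero; lra.
Qed.

Lemma gamma_st_phi_pp_coef_0 j : gamma_st j = - phi_pp_coef j 0.
Proof.
  rewrite gamma_st_k_pow_coef. unfold phi_pp_coef, phi_const.
  rewrite Nat.sub_0_r. simpl. ring.
Qed.

Lemma CV_radius_phi_reg_coef j : Rbar_le (/ 4) (CV_radius (phi_reg_coef j)).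
Proof.
  apply CV_radius_ge_of_ex_pseries; [lra|]. intros x Hx. eexists. apply phi_laurent. lra.
Qed.

Lemma phi_S_derive_laurent j x : 0 < Rabs x < / 4 ->
  x / (1 + x) * phi (S j) (1 + x)
  = principal_part (coef_derive (phi_pp_coef j)) (S (2 * j)) x
    + PSeries (PS_derive (phi_reg_coef j)) x.
Proof.
  intro Hx.
  assert (Hx0 : x <> 0) by (intros ->; rewrite Rabs_R0 in Hx; lra).
  transitivity (Derive (fun y => phi j (1 + y)) x); [symmetry|]; apply is_derive_unique.
  - apply is_derive_comp_add.
    replace (x / (1 + x)) with ((1 + x - 1) / (1 + x)) by (f_equal; ring).
    destruct Hx as [_ Hx]. apply Rabs_def2 in Hx. apply is_derive_phi; lra.
  - apply (is_derive_ext_loc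
             (fun y => principal_part (phi_pp_coef j) (2 * j) y + PSeries (phi_reg_coef j) y)).
    + apply (locally_of_Rabs_lt x (Rmin (Rabs x) (/ 4 - Rabs x))); [apply Rmin_case; lra|].
      intros z Hz. generalize (Rmin_l (Rabs x) (/ 4 - Rabs x)) (Rmin_r (Rabs x) (/ 4 - Rabs x)).
      intros. assert (Hz' : 0 < Rabs z < / 4).
      { generalize (Rabs_triang_inv x z) (Rabs_triang (z - x) x).
        rewrite (Rabs_minus_sym x z). replace (z - x + x) with z by ring. lra. }
      rewrite (is_pseries_unique _ _ _ (phi_laurent j z Hz')). apply Rplus_minus.
    + apply (is_derive_plus (principal_part (phi_pp_coef j) (2 * j)) (PSeries (phi_reg_coef j)));
        [apply is_derive_principal_part, Hx0|].
      apply is_derive_PSeries, (Rabs_lt_CV_radius _ (/ 4)); [apply CV_radius_phi_reg_coef|lra].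
Qed.

(* With [R_j] the regular part of [phi_j], [(1 + 1/x) R_j'(x) = R_j'(0)/x + regular]. *)
Lemma phi_S_laurent j x : 0 < Rabs x < / 4 ->
  is_pseries (PS_plus (PS_derive (phi_reg_coef j)) (PS_decr_1 (PS_derive (phi_reg_coef j)))) x
    (phi (S j) (1 + x)
     - ((1 + / x) * principal_part (coef_derive (phi_pp_coef j)) (S (2 * j)) x
        + PS_derive (phi_reg_coef j) 0 / x)).
Proof.
  intro Hx. set (r := phi_reg_coef j).
  set (dP := principal_part (coef_derive (phi_pp_coef j)) (S (2 * j))).
  assert (Hx0 : x <> 0) by (intros ->; rewrite Rabs_R0 in Hx; lra).
  assert (Hxl : 0 < 1 + x) by (destruct Hx as [_ Hx2]; apply Rabs_def2 in Hx2; lra).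
  assert (Hr : Rbar_lt (Rabs x) (CV_radius (PS_derive r))).
  { rewrite CV_radius_derive.
    apply (Rabs_lt_CV_radius _ (/ 4)); [apply CV_radius_phi_reg_coef|lra]. }
  assert (Hdecr := PSeries_decr_1 (PS_derive r) x (CV_radius_inside _ _ Hr)).
  assert (Hex : ex_pseries (PS_decr_1 (PS_derive r)) x)
    by (apply CV_radius_inside; rewrite CV_radius_decr_1; exact Hr).
  replace (phi (S j) (1 + x) - ((1 + / x) * dP x + PS_derive r 0 / x))
    with (plus (PSeries (PS_derive r) x) (PSeries (PS_decr_1 (PS_derive r)) x)).
  - apply (@is_pseries_plus R_AbsRing R_NormedModule); apply PSeries_correct;
      [apply CV_radius_inside, Hr | exact Hex].
  - replace (phi (S j) (1 + x)) with ((1 + x) / x * (dP x + PSeries (PS_derive r) x))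
      by (unfold dP, r; rewrite <- phi_S_derive_laurent by exact Hx; field; lra).
    unfold plus; simpl. rewrite Hdecr. field. exact Hx0.
Qed.

Lemma principal_part_phi_S j y : y <> 0 ->
  principal_part (phi_pp_coef (S j)) (2 * S j) y
  = (1 + / y) * principal_part (coef_derive (phi_pp_coef j)) (S (2 * j)) y
    - gamma_st (S j) / y.
Proof.
  intro Hy.
  set (b := coef_derive (phi_pp_coef j)). set (d0 := PS_derive (phi_reg_coef j) 0).
  (* [B] are the coefficients of [(1 + 1/x) S_j'(x) + d0/x]; comparing the [1/x] coefficients
     with those of [S_(j+1)] identifies [d0 = -gamma_(j+1)]. *)
  set (B := fun k => coef_trunc b (S (2 * j)) k + coef_shift (coef_trunc b (S (2 * j))) k
                     + coef_trunc (fun _ => d0) 0 k).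
  assert (HB : forall x, x <> 0 ->
            principal_part B (2 * S j) x = (1 + / x) * principal_part b (S (2 * j)) x + d0 / x).
  { intros x Hx. unfold B. rewrite !principal_part_plus.
    replace (2 * S j)%nat with (S (S (2 * j))) by lia.
    rewrite principal_part_shift, !principal_part_trunc by (auto; lia).
    unfold principal_part at 3. simpl. field. exact Hx. }
  assert (Hcoef : forall k, (k <= 2 * S j)%nat -> phi_pp_coef (S j) k = B k).
  { apply (laurent_principal_part_unique (fun x => phi (S j) (1 + x)) _ _ (phi_reg_coef (S j))
             (PS_plus (PS_derive (phi_reg_coef j)) (PS_decr_1 (PS_derive (phi_reg_coef j))))
             _ (/ 4)); [lra | apply phi_laurent |].
    intros x Hx. rewrite HB by (intros ->; rewrite Rabs_R0 in Hx; lra).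
    apply phi_S_laurent, Hx. }
  assert (Hd0 : d0 = - gamma_st (S j)).
  { rewrite gamma_st_phi_pp_coef_0, (Hcoef 0%nat) by lia.
    unfold B, b, coef_trunc, coef_derive, coef_shift. simpl. ring. }
  unfold principal_part at 1. rewrite (sum_eq _ (fun k => B k / y ^ S k))
    by (intros k Hk; rewrite Hcoef by exact Hk; reflexivity).
  fold (principal_part B (2 * S j) y). rewrite HB, Hd0 by exact Hy. field. exact Hy.
Qed.

Lemma c_fun_eta j l : 0 < l -> l <> 1 ->
  c_fun j (eta l) = phi j l - principal_part (phi_pp_coef j) (2 * j) (l - 1).
Proof.
  revert l. induction j as [|j IH]; intros l Hl H1; simpl c_fun; rewrite lam_of_eta by exact Hl;
    assert (Hn := eta_neq_0 l Hl H1).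
  - unfold phi, phi_pp_coef, phi_const, principal_part. simpl.
    unfold k_coef. simpl. field. split; [lra | exact Hn].
  - assert (HC : is_derive (fun t => phi j t - principal_part (phi_pp_coef j) (2 * j) (t - 1)) l
              ((l - 1) / l * phi (S j) l
               - principal_part (coef_derive (phi_pp_coef j)) (S (2 * j)) (l - 1))).
    { apply (is_derive_minus (phi j)); [apply is_derive_phi; assumption|].
      apply (is_derive_ext (fun t => principal_part (phi_pp_coef j) (2 * j) (-1 + t)));
        [intro t; f_equal; ring|].
      apply is_derive_comp_add. replace (-1 + l) with (l - 1) by ring.
      apply is_derive_principal_part. lra. }
    rewrite (is_derive_unique _ _ _ (is_derive_eta_comp _ _ l _ Hl H1 IH HC)).
    rewrite principal_part_phi_S by lra. field. repeat split; lra.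
Qed.

Theorem lemmaA3 (j : nat) :
  (exists Sp : R -> R, is_singular_part (phi j) 1 Sp) /\
  (forall Sp : R -> R, is_singular_part (phi j) 1 Sp ->
     forall l : R, 0 < l -> l <> 1 ->
       c_fun j (eta l) = phi j l - Sp l).
Proof.
  split.
  - exists (fun l => principal_part (phi_pp_coef j) (2 * j) (l - 1)).
    exists (2 * j)%nat, (phi_pp_coef j), (phi_reg_coef j), (/ 4).
    split; [lra|]. split; [reflexivity|].
    intros x Hx. replace (phi j x) with (phi j (1 + (x - 1))) by (f_equal; ring).
    apply phi_laurent, Hx.
  - intros Sp (N & b & c & r & Hr & HSp & Hc) l Hl H1.
    rewrite c_fun_eta, HSp by assumption. f_equal.
    apply (laurent_principal_part_eq (fun x => phi j (1 + x)) _ _ (phi_reg_coef j) c _ _ (/ 4) r);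
      [lra | exact Hr | apply phi_laurent |].
    intros x Hx. specialize (Hc (1 + x)). rewrite HSp in Hc.
    replace (1 + x - 1) with x in Hc by ring. apply Hc, Hx.
Qed.
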